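(* In the basic model with $n$ odd, the worst-case deterministic round complexity of the nontrivial move problem is $\Theta(\log(N/n))$. That is, there is an algorithm solving it in $O(\log(N/n))$ rounds, and every deterministic algorithm needs $\Omega(\log(N/n))$ rounds in the worst case.
   Context: Model (basic): $n>4$ agents are at distinct, arbitrary initial positions on a circle of circumference $1$ and act in synchronised unit-time rounds. Each agent has its own notion of right (clockwise) and left; these need not be consistent across agents. At the start of each round every agent $a$ chooses $\mathrm{dir}_a\in\{\text{right},\text{left}\}$ and moves at unit speed. Agents never pass: two colliding agents instantly reverse direction. There is no communication. At the end of a round each agent learns only the clockwise distance, in its own orientation, from its start to its end position. Agents have distinct IDs in $\{1,\dots,N\}$, $N\ge n$ known, and know only the parity of $n$. Rotation index: if $n_C$ agents start clockwise and $n_A$ anticlockwise (objective orientation), each agent moves to the initial position of the agent $(n_C-n_A)\bmod n$ places clockwise; this is the rotation index. A nontrivial move is a round whose rotation index is not in $\{0,n/2\}$. The nontrivial move problem is to assign to each agent a direction $\mathrm{dir}_a$ so that the round in which all agents start in these directions is a nontrivial move. *)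

From Stdlib Require Import Reals.
From mathcomp Require Import all_boot all_order all_algebra.

Set Implicit Arguments.
Unset Strict Implicit.
Unset Printing Implicit Defensive.

(*  - The circle is [0,1) with the objective clockwise direction being *)
(*    increasing coordinate (mod 1).                                   *)
(*  - Initial positions are labelled by "slots" 0..n-1 in objective    *)
(*    clockwise order: [pos k] is the position of slot k (k < n).      *)
(*  - Agents are indexed by their initial slot a : 'I_n.               *)
(*  - [chir a] = true iff agent a's own "right/clockwise" coincides    *)
(*    with the objective clockwise direction.                          *)
Record instance (n N : nat) := Instance {
  pos : nat -> R;
  pos_range : forall k, k < n -> Rle R0 (pos k) /\ Rlt (pos k) R1;
  pos_sorted : forall i j, i < j -> j < n -> Rlt (pos i) (pos j);
  chir : 'I_n -> bool;
  ident : 'I_n -> nat;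
  ident_inj : injective ident;
  ident_range : forall a, 0 < ident a <= N
}.

Definition cw_dist (u v : R) : R :=
  if Rle_dec u v then Rminus v u else Rplus (Rminus v u) R1.

(* A deterministic algorithm: each agent, knowing its ID and the list of
   observations it made so far (oldest first), chooses its direction for
   the next round, in its OWN orientation (true = right = its clockwise).
   The algorithm may depend on N and on the parity of n (it is chosen
   after N, and in the statement only odd n are considered), but not
   on n itself, the positions, or the chiralities. *)
Definition algorithm := nat -> seq R -> bool.

Definition rot_index (n : nat) (cwb : 'I_n -> bool) : nat :=
  let nC := #|[pred a | cwb a]| in
  let nA := #|[pred a | ~~ cwb a]| in
  absz (((nC%:Z - nA%:Z) %% n%:Z)%Z).

Definition nontrivial (n r : nat) : bool := (r != 0) && (r.*2 != n).

Section Run.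
Variables (n N : nat) (alg : algorithm) (I : instance n N).

Definition rot_of (h : 'I_n -> seq R) : nat :=
  rot_index (fun a => alg (ident I a) (h a) == chir I a).

Definition observe (a : 'I_n) (k r : nat) : R :=
  let k' := (k + r) %% n in
  if chir I a then cw_dist (pos I k) (pos I k')
  else cw_dist (pos I k') (pos I k).

(* State before round t (0-based): current slot and history of each agent.
   In a round with rotation index r every agent moves to the initial
   position of the agent r places clockwise, i.e. slot k -> (k + r) mod n. *)
Fixpoint state (t : nat) : ('I_n -> nat) * ('I_n -> seq R) :=
  match t with
  | 0 => (fun a => nat_of_ord a, fun _ => [::])
  | t'.+1 =>
      let s := (state t').1 in
      let h := (state t').2 in
      let r := rot_of h in
      (fun a => (s a + r) %% n, fun a => rcons (h a) (observe a (s a) r))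
  end.

Definition round_rot (t : nat) : nat := rot_of (state t).2.

End Run.

Definition solves_within (alg : algorithm) (n N T : nat) : Prop :=
  forall I : instance n N, exists2 t, t < T & nontrivial n (round_rot alg I t).

From Pilot Require Import Defs.
From Stdlib Require Import Reals Lra.
From mathcomp Require Import all_boot all_order all_algebra.
From mathcomp Require Import zify.

Set Implicit Arguments.
Unset Strict Implicit.

(* For odd n the rotation index n_C - n_A is odd, so it is never n/2, and it
   vanishes exactly when all agents move in the same objective direction.  As
   long as every round is trivial nobody moves, so every observation is 0 and
   after t rounds each agent has seen nothing but its own ID.

   Upper bound: in round t each agent goes right iff bit t of its ID is set.
   If the first L rounds are all trivial, then bit t of the ID of a xored with
   the chirality of a is the same for all agents, for every t < L; hence the
   ID of a is determined by its chirality and by ID / 2^L, so that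
   n <= 2 (N / 2^L + 1), which fails for L = log(N/n) + 3.

   Lower bound: the first T decisions of an ID on all-zero histories form one
   of 2^T patterns.  If N > 2^T (n - 1), some n IDs share a pattern; giving
   them a common chirality makes all of them move in the same direction for T
   rounds, none of which is then nontrivial. *)

Section RotationIndex.
Variable n : nat.
Implicit Type cwb : 'I_n -> bool.

Lemma card_dir_split cwb : #|[pred a | cwb a]| + #|[pred a | ~~ cwb a]| = n.
Proof. by rewrite -[RHS](card_ord n) -(cardC [pred a | cwb a]). Qed.

Lemma eq_rot_index cwb1 cwb2 : cwb1 =1 cwb2 -> Defs.rot_index cwb1 = Defs.rot_index cwb2.
Proof.
move=> eq12; rewrite /Defs.rot_index.
have eq_cardP (P : bool -> bool) : #|[pred a | P (cwb1 a)]| = #|[pred a | P (cwb2 a)]|.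
  by apply: eq_card => a; rewrite !inE eq12.
by rewrite (eq_cardP id) (eq_cardP negb).
Qed.

Lemma rot_index_const cwb c : (forall a, cwb a = c) -> Defs.rot_index cwb = 0.
Proof.
move=> cwbE; have card_sum := card_dir_split cwb.
have other0 : (if c then #|[pred a | ~~ cwb a]| else #|[pred a | cwb a]|) = 0.
  by case: c cwbE => cwbE; apply: eq_card0 => a; rewrite !inE cwbE.
apply/eqP; rewrite /Defs.rot_index absz_eq0; apply/eqP/dvdz_mod0P; rewrite dvdzE.
suff -> : `|(#|[pred a | cwb a]|%:Z - #|[pred a | ~~ cwb a]|%:Z)%R| = n by [].
by case: c other0 {cwbE}; lia.
Qed.

Lemma rot_index_eq0_const cwb :
  odd n -> Defs.rot_index cwb = 0 -> forall a b, cwb a = cwb b.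
Proof.
move=> odd_n rot0 a b; apply: contraTeq isT => ab_neq; exfalso.
have card_sum := card_dir_split cwb.
set x := #|[pred a | cwb a]| in card_sum rot0.
set y := #|[pred a | ~~ cwb a]| in card_sum rot0.
have [x_gt0 y_gt0] : 0 < x /\ 0 < y.
  case ca: (cwb a) ab_neq; case cb: (cwb b) => // _; split; apply/card_gt0P;
  solve [by exists a; rewrite inE ca | by exists b; rewrite inE cb].
have n_dvd : (n %| `|(x%:Z - y%:Z)%R|)%N.
  by rewrite -(@dvdzE n); apply/dvdz_mod0P; rewrite /Defs.rot_index -/x -/y in rot0; lia.
(* x = y would make x + y = n even; otherwise 0 < |x - y| < n. *)
have n_half := odd_double_half n; rewrite odd_n in n_half.
have [diff0 | diff_gt0] := posnP `|(x%:Z - y%:Z)%R|; first lia.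
have := dvdn_leq diff_gt0 n_dvd; lia.
Qed.

End RotationIndex.

Lemma nontrivial_odd n r : odd n -> nontrivial n r = (r != 0).
Proof.
move=> odd_n; rewrite /nontrivial; case: eqP => //= _.
by apply/negP => /eqP n_double; rewrite -n_double odd_double in odd_n.
Qed.

Lemma cw_distxx p : cw_dist p p = R0.
Proof.
rewrite /cw_dist; case: (Rle_dec p p) => [le_pp | not_le] /=; first exact: Rminus_diag.
by case: not_le; apply: Rle_refl.
Qed.

Lemma nseqS (T : Type) (x : T) t : nseq t.+1 x = rcons (nseq t x) x.
Proof. by elim: t => //= t ->. Qed.

Lemma solves_within_le alg n N T T' :
  T <= T' -> solves_within alg n N T -> solves_within alg n N T'.
Proof.
move=> le_TT' solves I; have [t lt_tT] := solves I.
by exists t => //; apply: leq_trans le_TT'.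
Qed.

Section QuietRounds.
Variables (n N : nat) (alg : algorithm) (I : instance n N).

Definition quiet_until (t : nat) := forall t', t' < t -> round_rot alg I t' = 0.

Lemma state_quiet t : quiet_until t ->
  forall a, (state alg I t).1 a = a /\ (state alg I t).2 a = nseq t R0.
Proof.
elim: t => [|t IH] quiet a //.
have [pos_t hist_t] := IH (fun t' lt_t't => quiet t' (ltnW lt_t't)) a.
have rot0 : rot_of alg I (state alg I t).2 = 0 := quiet t (ltnSn t).
rewrite nseqS [state _ _ t.+1]/= rot0 /= addn0 pos_t hist_t modn_small //.
rewrite /observe addn0 modn_small //.
by split => //; case: chir; rewrite cw_distxx.
Qed.

Lemma quiet_untilS t : quiet_until t -> round_rot alg I t = 0 -> quiet_until t.+1.
Proof. by move=> quiet rot0 t'; rewrite ltnS leq_eqVlt => /predU1P [-> | /quiet]. Qed.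

Lemma round_rot_quiet t : quiet_until t ->
  round_rot alg I t = Defs.rot_index (fun a => alg (ident I a) (nseq t R0) == chir I a).
Proof.
by move=> quiet; apply: eq_rot_index => a; rewrite (state_quiet quiet a).2.
Qed.

End QuietRounds.

Definition bit_alg : algorithm := fun id h => odd (id %/ 2 ^ size h).

Lemma eq_from_low_bits L x y :
  (forall t, t < L -> odd (x %/ 2 ^ t) = odd (y %/ 2 ^ t)) ->
  x %/ 2 ^ L = y %/ 2 ^ L -> x = y.
Proof.
elim: L x y => [|L IH] x y low_eq; first by rewrite !expn0 !divn1.
have half_shift z t : z./2 %/ 2 ^ t = z %/ 2 ^ t.+1 by rewrite -divn2 -divnMA -expnS.
rewrite -!half_shift => high_eq.
have odd_eq : odd x = odd y by have := low_eq 0 isT; rewrite expn0 !divn1.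
rewrite -(odd_double_half x) -(odd_double_half y) odd_eq (IH x./2 y./2) //.
by move=> t lt_tL; rewrite !half_shift; apply: low_eq.
Qed.

Lemma bit_alg_quiet_card n N (I : instance n N) L :
  odd n -> quiet_until bit_alg I L -> n <= 2 * (N %/ 2 ^ L).+1.
Proof.
move=> odd_n quiet.
have bits_xor t : t < L -> forall a b : 'I_n,
    (odd (ident I a %/ 2 ^ t) == chir I a) = (odd (ident I b %/ 2 ^ t) == chir I b).
  move=> lt_tL a b; have := quiet t lt_tL.
  rewrite round_rot_quiet => [|t' lt_t't]; last exact/quiet/(ltn_trans lt_t't).
  by move/(rot_index_eq0_const odd_n)/(_ a b); rewrite /bit_alg size_nseq.
have high_lt a : ident I a %/ 2 ^ L < (N %/ 2 ^ L).+1.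
  by rewrite ltnS leq_div2r //; case/andP: (ident_range I a).
pose g a : bool * 'I_(N %/ 2 ^ L).+1 := (chir I a, Ordinal (high_lt a)).
have g_inj : injective g.
  move=> a b [chir_eq high_eq]; apply: (@ident_inj _ _ I).
  apply: eq_from_low_bits high_eq => t lt_tL; move: (bits_xor t lt_tL a b).
  by rewrite chir_eq; case: (chir I b); case: odd; case: odd.
by have := leq_card g g_inj; rewrite card_prod card_bool !card_ord.
Qed.

Lemma quiet_bound_fails n N :
  2 < n -> 2 * (N %/ 2 ^ (trunc_log 2 (N %/ n)).+3).+1 < n.
Proof.
move=> n_gt2; set k := trunc_log 2 (N %/ n); set P := 2 ^ k.+1.
have N_lt : N < P * n by rewrite -ltn_divLR ?trunc_log_ltn //; lia.
have P_gt0 : 0 < P by rewrite expn_gt0.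
have pow_eq : 2 ^ k.+3 = 4 * P by rewrite /P !expnS; lia.
set q := N %/ 2 ^ k.+3; have low_le : q * (4 * P) <= N by rewrite -pow_eq leq_divM.
suff : 4 * q < n by lia.
by rewrite -(ltn_pmul2r P_gt0); nia.
Qed.

Lemma bit_alg_solves n N :
  odd n -> 2 < n -> solves_within bit_alg n N (trunc_log 2 (N %/ n)).+3.
Proof.
move=> odd_n n_gt2 I; set L := _.+3.
case: (boolP [exists t : 'I_L, nontrivial n (round_rot bit_alg I t)]).
  by case/existsP => t; exists t.
move/existsPn => trivial_rounds; exfalso.
have quiet : quiet_until bit_alg I L.
  move=> t lt_tL; apply/eqP; have := trivial_rounds (Ordinal lt_tL).
  by rewrite nontrivial_odd // negbK.
by have := bit_alg_quiet_card odd_n quiet; rewrite leqNgt quiet_bound_fails.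
Qed.

Lemma exists_big_fiber (A B : finType) (f : A -> B) m :
  #|B| * m < #|A| -> exists b, m < #|[pred a | f a == b]|.
Proof.
move=> card_lt; case: (pickP (fun b => m < #|[pred a | f a == b]|)) => [b big | small].
  by exists b.
suff : #|A| <= #|B| * m by rewrite leqNgt card_lt.
rewrite -sum1_card (partition_big f xpredT) //= -sum_nat_const; apply: leq_sum => b _.
by rewrite sum1_card leqNgt small.
Qed.

Lemma injection_into_pred (T : finType) (P : {pred T}) m :
  m <= #|P| -> exists2 g : 'I_m -> T, injective g & forall i, g i \in P.
Proof.
move=> le_mP; exists (fun i => enum_val (A := P) (widen_ord le_mP i)).
  by move=> i j /= /enum_val_inj /(congr1 val) eq_ij; apply: val_inj.
by move=> i; apply: enum_valP.
Qed.

Section HarmonicPositions.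
Local Open Scope R_scope.

Definition harmonic_pos (k : nat) : R := 1 - / (INR k + 1).

Lemma harmonic_pos_range k : 0 <= harmonic_pos k < 1.
Proof.
have k_ge0 := pos_INR k; rewrite /harmonic_pos.
have inv_gt0 : 0 < / (INR k + 1) by apply: Rinv_0_lt_compat; lra.
have inv_le1 : / (INR k + 1) <= 1.
  by have := Rinv_le_contravar 1 (INR k + 1) Rlt_0_1 ltac:(lra); rewrite Rinv_1.
lra.
Qed.

Lemma harmonic_pos_increasing i j : (i < j)%N -> harmonic_pos i < harmonic_pos j.
Proof.
move=> /ltP /lt_INR lt_ij; have i_ge0 := pos_INR i; rewrite /harmonic_pos.
suff : / (INR j + 1) < / (INR i + 1) by lra.
by apply: Rinv_1_lt_contravar; lra.
Qed.

End HarmonicPositions.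

Definition clockwise_instance n N (id : 'I_n -> nat)
    (id_inj : injective id) (id_range : forall a, 0 < id a <= N) : instance n N :=
  @Instance n N harmonic_pos (fun k _ => harmonic_pos_range k)
    (fun i j lt_ij _ => harmonic_pos_increasing lt_ij) (fun _ => true) id id_inj id_range.

Lemma quiet_instance_exists n N (alg : algorithm) T :
  2 ^ T * n.-1 < N -> exists I : instance n N, quiet_until alg I T.
Proof.
move=> N_big.
pose pattern (i : 'I_N) : {ffun 'I_T -> bool} := [ffun t : 'I_T => alg i.+1 (nseq t R0)].
have [w big_fiber] : exists w, n.-1 < #|[pred i | pattern i == w]|.
  by apply: exists_big_fiber; rewrite card_ffun card_bool !card_ord.
have [g g_inj g_fiber] := injection_into_pred (leq_trans (leqSpred n) big_fiber).
pose ids (a : 'I_n) := (g a).+1.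
have ids_inj : injective ids by move=> a b [/val_inj/g_inj].
have ids_range a : 0 < ids a <= N by rewrite /ids ltn_ord.
exists (clockwise_instance ids_inj ids_range).
suff quiet t : t <= T -> quiet_until alg (clockwise_instance ids_inj ids_range) t.
  exact: quiet.
elim: t => [|t IH] le_tT; first by [].
have quiet_t := IH (ltnW le_tT).
apply: (quiet_untilS quiet_t); rewrite (round_rot_quiet quiet_t).
apply: (rot_index_const (c := w (Ordinal le_tT))) => a /=.
by have := g_fiber a; rewrite inE => /eqP <-; rewrite ffunE eqb_id.
Qed.

Lemma solves_within_card alg n N T : solves_within alg n N T -> N <= 2 ^ T * n.-1.
Proof.
move=> solves; rewrite leqNgt; apply/negP => /(quiet_instance_exists alg) [I quiet].
by have [t lt_tT] := solves I; rewrite quiet // /nontrivial eqxx.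
Qed.

Lemma trunc_log_div_le n N T : 0 < n -> N <= 2 ^ T * n -> trunc_log 2 (N %/ n) <= T.
Proof.
move=> n_gt0 N_le; rewrite -[T in _ <= T](trunc_expnK T (isT : 1 < 2)).
by apply: leq_trunc_log; rewrite -(mulnK (2 ^ T) n_gt0); apply: leq_div2r.
Qed.

Theorem proposition3 :
  (exists C : nat, forall N : nat, exists alg : algorithm,
     forall n : nat, odd n -> 4 < n -> n <= N ->
       solves_within alg n N (C * (trunc_log 2 (N %/ n)).+1))
  /\
  (exists c : nat, 0 < c /\
     forall (N : nat) (alg : algorithm) (n T : nat),
       odd n -> 4 < n -> n <= N ->
       solves_within alg n N T -> trunc_log 2 (N %/ n) <= c * T).
Proof.
split.
- exists 3 => N; exists bit_alg => n odd_n n_gt4 _.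
  by apply: solves_within_le (bit_alg_solves odd_n _); lia.
- exists 1; split => // N alg n T _ n_gt4 _ solves; rewrite mul1n.
  apply: trunc_log_div_le; first lia.
  by apply: leq_trans (solves_within_card solves) _; rewrite leq_mul2l leq_pred orbT.
Qed.
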